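(* The duality gap between ADP and SFP is unbounded: for every $N\in\mathbb{N}$ there exist a directed graph $G=(V,A)$ and vertices $s,t\in V$ such that the minimum number of arc pairs needed to separate $s$ and $t$ in $G$ exceeds the maximum number of pairwise almost disjoint $s$-$t$-paths in $G$ by at least $N$.
   Context: Directed graphs may contain parallel arcs; paths are directed paths without repeated vertices. A set of paths is almost disjoint if every two of its paths have at most one arc in common. The optimization version of ADP asks for the maximum number of pairwise almost disjoint $s$-$t$-paths in $G$. A set $\mathcal{A}$ of unordered pairs of distinct arcs of $G$ separates $s$ and $t$ if every $s$-$t$-path in $G$ contains both arcs of at least one pair in $\mathcal{A}$; the optimization version of SFP asks for the minimum size of such a set. (The LP relaxations of the natural integer programs for these two problems form a primal-dual pair, so the SFP minimum is always at least the ADP maximum; the duality gap is their difference.) *)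

From mathcomp Require Import all_boot.
Set Implicit Arguments. Unset Strict Implicit. Unset Printing Implicit Defensive.

(* A finite directed multigraph: vertex type V, darc type A (parallel arcs
   allowed since distinct arcs may share tail and head), tail/head maps. *)
Record digraph := Digraph {
  dvert : finType;
  darc : finType;
  tail : darc -> dvert;
  head : darc -> dvert }.

Section Paths.
Variable G : digraph.

Fixpoint walk_from (x : dvert G) (p : seq (darc G)) : bool :=
  if p is a :: q then (tail a == x) && walk_from (head a) q else true.

Definition path_verts (s : dvert G) (p : seq (darc G)) : seq (dvert G) :=
  s :: map (@head G) p.

Definition is_st_path (s t : dvert G) (p : seq (darc G)) : bool :=
  [&& walk_from s p, last s (map (@head G) p) == t & uniq (path_verts s p)].

Definition almost_disjoint_paths (s t : dvert G) (F : seq (seq (darc G))) : Prop :=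
  [/\ uniq F, all (is_st_path s t) F &
      forall p q, p \in F -> q \in F -> p != q ->
        #|[set a | (a \in p) && (a \in q)]| <= 1].

Definition separating_pairs (s t : dvert G) (P : {set {set darc G}}) : Prop :=
  (forall e, e \in P -> #|e| = 2) /\
  (forall p, is_st_path s t p ->
     exists2 e, e \in P & forall a, a \in e -> a \in p).

End Paths.

Arguments walk_from {G} x p.
Arguments path_verts {G} s p.
Arguments is_st_path {G} s t p.
Arguments almost_disjoint_paths {G} s t F.
Arguments separating_pairs {G} s t P.

From Pilot Require Import Defs.
From mathcomp Require Import all_boot.
Set Implicit Arguments. Unset Strict Implicit. Unset Printing Implicit Defensive.

(* The graph is made of N copies of a gadget joining s to t: a chain of four
   steps, each step a pair of parallel arcs, so that the s-t-paths of a copy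
   are the 16 binary words of length 4, and two such paths share one arc for
   each position where their words agree.  At every position some two of three
   words agree, and there are only three pairs of words, so among three words
   two agree twice: each copy carries at most two almost disjoint paths, and
   ADP <= 2N.  A pair of arcs can only separate paths within one copy, and any
   two pairs of a copy are both avoided by some word (flip one bit of each),
   so each copy needs three pairs: SFP >= 3N. *)

Lemma size_le_sum_count (I : finType) (T : eqType) (s : seq T) (P : I -> pred T) :
  (forall x, x \in s -> exists i, P i x) -> size s <= \sum_i count (P i) s.
Proof.
move=> covered; rewrite -sum1_size.
rewrite (eq_bigr (fun i => \sum_(x <- s) P i x)); last first.
  by move=> i _; rewrite -sum1_count big_mkcond.
rewrite exchange_big big_seq [leqRHS]big_seq; apply: leq_sum => x /covered[i Pix].
by rewrite (bigD1 i) //= Pix.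
Qed.

Lemma sum_card_disjoint_le (I T : finType) (A : {set T}) (B : I -> {set T}) :
  (forall i, B i \subset A) -> (forall x i j, x \in B i -> x \in B j -> i = j) ->
  \sum_i #|B i| <= #|A|.
Proof.
move=> subA disjB; rewrite -sum1_card.
have -> : \sum_i #|B i| = \sum_i \sum_(x in A) (x \in B i).
  apply: eq_bigr => i _; rewrite -sum1_card big_mkcond [RHS]big_mkcond /=.
  apply: eq_bigr => x _; have := subsetP (subA i) x.
  by case: (x \in B i); case: (x \in A) => // /(_ isT).
rewrite exchange_big /=; apply: leq_sum => x _.
have [i xBi|noB] := pickP (fun i => x \in B i); last by rewrite big1 // => i; rewrite noB.
rewrite (bigD1 i) //= xBi big1 // => j /negbTE ji.
by case: (boolP (x \in B j)) => // /(disjB _ _ _ xBi) ij; rewrite ij eqxx in ji.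
Qed.

Definition agree (I : finType) (T : eqType) (u v : {ffun I -> T}) := [set i | u i == v i].

Lemma agree_twice_of_three (I : finType) (u v w : {ffun I -> bool}) :
  3 < #|I| -> [|| 1 < #|agree u v|, 1 < #|agree u w| | 1 < #|agree v w|].
Proof.
move=> I_gt3; apply: contraTT I_gt3; rewrite !negb_or -!leqNgt => /and3P[uv uw vw].
have pigeonhole i : 1 <= (i \in agree u v) + (i \in agree u w) + (i \in agree v w).
  by rewrite !inE; case: (u i); case: (v i); case: (w i).
have card_sum (A : {set I}) : #|A| = \sum_i (i \in A) by rewrite -sum1_card big_mkcond.
apply: leq_trans (leq_add (leq_add uv uw) vw).
rewrite !card_sum -!big_split -sum1_card; exact: leq_sum.
Qed.

Section Gadget.
Variable N : nat.

(* Arc (c, i, b) is the b-th of the two parallel arcs at step i of copy c.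
   The inner vertices of copy c are (Some c, k) for 0 < k < 4; s and t are
   (None, 0) and (None, 4), shared by all copies. *)
Definition garc := ('I_N * 'I_4 * bool)%type.
Definition copy (a : garc) : 'I_N := a.1.1.
Definition step (a : garc) : 'I_4 := a.1.2.
Definition bit (a : garc) : bool := a.2.

Definition gvert := (option 'I_N * 'I_5)%type.
Definition vtx (c : 'I_N) (k : nat) : gvert := (if 0 < k < 4 then Some c else None, inord k).
Definition src : gvert := (None, inord 0).
Definition snk : gvert := (None, inord 4).

Definition gadget :=
  @Digraph gvert garc (fun a => vtx (copy a) (step a)) (fun a => vtx (copy a) (step a).+1).

Lemma vtx_eq c c' k k' : k <= 4 -> k' <= 4 ->
  (vtx c k == vtx c' k') = (k == k') && ((0 < k < 4) ==> (c == c')).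
Proof.
move=> k_le4 k'_le4; rewrite /vtx xpair_eqE andbC -val_eqE /= !inordK //.
by case: eqVneq => [<-|] //=; case: (0 < k < 4).
Qed.

Lemma src_neq_snk : src != snk.
Proof. by rewrite xpair_eqE -val_eqE /= !inordK. Qed.

Lemma vtx0 c : vtx c 0 = src. Proof. by []. Qed.
Lemma vtx4 c : vtx c 4 = snk. Proof. by []. Qed.

Definition word_path c (w : {ffun 'I_4 -> bool}) : seq garc :=
  [seq (c, i, w i) | i <- enum 'I_4].

Lemma mem_word_path c w a : (a \in word_path c w) = (copy a == c) && (bit a == w (step a)).
Proof.
case: a => [[c' i] b]; rewrite /copy /bit /step /=.
by apply/mapP/andP => [[j _ [-> -> ->]] //|[/eqP-> /eqP->]]; exists i; rewrite ?mem_enum.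
Qed.

Lemma word_path_st c w : @is_st_path gadget src snk (word_path c w).
Proof.
rewrite /is_st_path /word_path !enum_ordSl enum_ord0 /= /copy /bump /=.
by rewrite -(vtx0 c) -(vtx4 c) !inE !vtx_eq // !eqxx.
Qed.

Definition slot (a : garc) : 'I_N * nat := (copy a, nat_of_ord (step a)).

Lemma walk_vtx_snk_slots c k p : 0 < k <= 4 ->
  @walk_from gadget (vtx c k) p -> last (vtx c k) (map (@Defs.head gadget) p) = snk ->
  map slot p = [seq (c, i) | i <- iota k (4 - k)].
Proof.
elim: p k => [|a p IHp] k /andP[k_gt0 k_le4] /=.
  by move=> _ /eqP; rewrite -(vtx4 c) vtx_eq // => /andP[/eqP-> _].
case/andP; rewrite vtx_eq ?(ltnW (ltn_ord _)) // => /andP[/eqP step_a].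
have k_lt4 : k < 4 by rewrite -step_a.
rewrite step_a k_gt0 k_lt4 /= => /eqP copy_a.
rewrite copy_a => walk_p last_p.
by rewrite (IHp k.+1) // -(subnSK k_lt4) /= /slot copy_a step_a.
Qed.

Lemma slots_word_path c p : map slot p = [seq (c, i) | i <- iota 0 4] ->
  p = word_path c [ffun i : 'I_4 => nth false (map bit p) i].
Proof.
move=> slots_p; have size_p : size p = 4 by rewrite -(size_map slot) slots_p size_map size_iota.
apply: (@eq_from_nth _ (c, ord0, false)); first by rewrite size_map size_enum_ord.
move=> i; rewrite size_p => i_lt4; pose j := Ordinal i_lt4.
have := congr1 (nth (c, 0) ^~ i) slots_p.
rewrite (nth_map 0) ?size_iota // nth_iota // -[i]/(nat_of_ord j).
rewrite /word_path (nth_map j) ?size_enum_ord // nth_ord_enum ffunE.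
rewrite !(nth_map (c, ord0, false)) ?size_p //.
case: (nth _ p j) => [[c' i'] b]; rewrite /slot /copy /step /= => -[-> i'_j].
by congr (_, _, _); apply: val_inj.
Qed.

Lemma st_path_word_path p : @is_st_path gadget src snk p -> exists c w, p = word_path c w.
Proof.
case/and3P => walk_p /eqP last_p _.
case: p walk_p last_p => [|a p] /=.
  by move=> _ src_snk; have := src_neq_snk; rewrite src_snk eqxx.
case/andP => tail_a walk_p last_p.
move: tail_a; rewrite -(vtx0 (copy a)) vtx_eq ?(ltnW (ltn_ord _)) // => /andP[/eqP step_a _].
rewrite step_a in walk_p last_p.
have slots_p := walk_vtx_snk_slots (k := 1) isT walk_p last_p.
exists (copy a), [ffun i : 'I_4 => nth false (map bit (a :: p)) i]; apply: slots_word_path.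
by rewrite /= slots_p /slot step_a.
Qed.
Lemma agree_common_arcs c u v : 1 < #|agree u v| ->
  1 < #|[set a | (a \in word_path c u) && (a \in word_path c v)]|.
Proof.
case/card_gt1P => i [j [+ + ij]]; rewrite !inE => /eqP uv_i /eqP uv_j.
apply/card_gt1P; exists (c, i, u i), (c, j, u j).
rewrite !inE !mem_word_path /copy /bit /step /= -uv_i -uv_j !eqxx.
by rewrite !xpair_eqE (negbTE ij) andbF.
Qed.

Definition in_copy c (p : seq garc) := [exists w, p == word_path c w].

Lemma count_in_copy_le2 c F :
  @almost_disjoint_paths gadget src snk F -> count (in_copy c) F <= 2.
Proof.
case=> uniqF _ adF; rewrite -size_filter; have := filter_uniq (in_copy c) uniqF.
have inF p : p \in filter (in_copy c) F -> p \in F /\ exists w, p = word_path c w.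
  by rewrite mem_filter => /andP[/existsP[w /eqP->] ->]; split; last exists w.
case: filter inF => [|p1 [|p2 [|p3 r]]] // inF.
rewrite /= !inE !negb_or => /andP[/and3P[p12 p13 _] /andP[/andP[p23 _] _]].
have /inF[p1F [w1 E1]] : p1 \in [:: p1, p2, p3 & r] by rewrite inE eqxx.
have /inF[p2F [w2 E2]] : p2 \in [:: p1, p2, p3 & r] by rewrite !inE eqxx orbT.
have /inF[p3F [w3 E3]] : p3 \in [:: p1, p2, p3 & r] by rewrite !inE eqxx !orbT.
have I4_gt3 : 3 < #|'I_4| by rewrite card_ord.
have := agree_twice_of_three w1 w2 w3 I4_gt3.
by case/or3P => /(agree_common_arcs c); rewrite -?E1 -?E2 -?E3 ltnNge adF.
Qed.

Lemma word_path_step_inj c w a b :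
  a \in word_path c w -> b \in word_path c w -> step a = step b -> a = b.
Proof.
case: a b => [[ca ia] ba] [[cb ib] bb]; rewrite !mem_word_path /copy /step /bit /=.
by case/andP => /eqP-> /eqP-> /andP[/eqP-> /eqP->] ->.
Qed.

Lemma word_path_avoid2 c (e1 e2 : {set garc}) : e1 != set0 -> #|e2| = 2 ->
  exists w, ~ {subset e1 <= word_path c w} /\ ~ {subset e2 <= word_path c w}.
Proof.
case/set0Pn => x xe1 /eqP/cards2P[y [y' [yy' ->]]].
(* If both arcs of e2 lie on the step of x, no word path contains both. *)
pose z := if step y == step x then y' else y.
pose w := [ffun i => if i == step x then ~~ bit x else ~~ bit z].
exists w; split => [/(_ x xe1)|cover_yy'].
  by rewrite mem_word_path ffunE eqxx; case: (bit x); rewrite andbF.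
have [y_in y'_in] : y \in word_path c w /\ y' \in word_path c w.
  by split; apply: cover_yy'; rewrite !inE eqxx ?orbT.
have [zx|zx] := eqVneq (step z) (step x).
  move: zx; rewrite /z; case: eqP => [yx y'x|_ /eqP] //.
  by move: yy'; rewrite (word_path_step_inj y_in y'_in) ?eqxx // yx y'x.
have : z \in word_path c w by rewrite /z; case: ifP.
by rewrite mem_word_path ffunE (negbTE zx); case: (bit z); rewrite andbF.
Qed.

Definition copy_arcs c := [set a : garc | copy a == c].
Definition copy_pairs (P : {set {set garc}}) c := [set e in P | e \subset copy_arcs c].

Lemma copy_pairs_gt2 P c : @separating_pairs gadget src snk P -> 2 < #|copy_pairs P c|.
Proof.
case=> pairsP sepP.
have cover w : exists2 e, e \in copy_pairs P c & {subset e <= word_path c w}.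
  have [e eP e_sub] := sepP _ (word_path_st c w); exists e => //.
  by rewrite inE eP; apply/subsetP => a /e_sub; rewrite mem_word_path inE => /andP[].
have nonempty e : e \in copy_pairs P c -> e != set0.
  by rewrite inE -card_gt0 => /andP[/pairsP-> _].
have pair e : e \in copy_pairs P c -> #|e| = 2 by rewrite inE => /andP[/pairsP].
have [e1 e1P cover1] := cover [ffun => false].
have [w1 [avoid1 _]] := word_path_avoid2 c (nonempty _ e1P) (pair _ e1P).
have [e2 e2P cover2] := cover w1.
have [w2 [avoid1' avoid2]] := word_path_avoid2 c (nonempty _ e1P) (pair _ e2P).
have [e3 e3P cover3] := cover w2.
apply/card_gt2P; exists e1, e2, e3; split=> //.
by split; apply/eqP => e_eq; [apply: avoid1 | apply: avoid2 | apply: avoid1'];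
  rewrite ?e_eq // -e_eq.
Qed.

Lemma almost_disjoint_size_le F : @almost_disjoint_paths gadget src snk F -> size F <= 2 * N.
Proof.
move=> adF; have [_ stF _] := adF.
have covered p : p \in F -> exists c, in_copy c p.
  by move=> /(allP stF)/st_path_word_path[c [w ->]]; exists c; apply/existsP; exists w.
apply: leq_trans (size_le_sum_count covered) _.
have -> : 2 * N = \sum_(c < N) 2 by rewrite sum_nat_const card_ord mulnC.
by apply: leq_sum => c _; apply: count_in_copy_le2.
Qed.

Lemma separating_card_ge P : @separating_pairs gadget src snk P -> 3 * N <= #|P|.
Proof.
move=> sepP; have [pairsP _] := sepP.
have -> : 3 * N = \sum_(c < N) 3 by rewrite sum_nat_const card_ord mulnC.
apply: leq_trans (sum_card_disjoint_le (B := copy_pairs P) _ _).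
- by apply: leq_sum => c _; apply: copy_pairs_gt2.
- by move=> c; apply/subsetP => e; rewrite inE => /andP[].
move=> e c c'; rewrite !inE => /andP[/pairsP e2 /subsetP ec] /andP[_ /subsetP ec'].
have /set0Pn[a ae] : e != set0 by rewrite -card_gt0 e2.
by move: (ec a ae) (ec' a ae); rewrite !inE => /eqP<- /eqP->.
Qed.

Definition first_steps_pairs : {set {set garc}} :=
  [set [set (x.1.1, ord0, x.1.2); (x.1.1, inord 1, x.2)] | x : 'I_N * bool * bool].

Lemma separating_first_steps_pairs : @separating_pairs gadget src snk first_steps_pairs.
Proof.
split=> [_ /imsetP[x _ ->]|p /st_path_word_path[c [w ->]]].
  by rewrite cards2 !xpair_eqE eqxx -val_eqE /= inordK.
exists [set (c, ord0, w ord0); (c, inord 1, w (inord 1))].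
  by apply/imsetP; exists (c, w ord0, w (inord 1)).
by move=> a; rewrite !inE => /orP[] /eqP->; rewrite mem_word_path /copy /step /bit /= !eqxx.
Qed.

End Gadget.

Theorem lemma1 : forall N : nat,
  exists (G : digraph) (s t : dvert G),
    s != t /\
    (exists P : {set {set darc G}}, separating_pairs s t P) /\
    (forall (P : {set {set darc G}}) (F : seq (seq (darc G))),
        separating_pairs s t P -> almost_disjoint_paths s t F ->
        size F + N <= #|P|).
Proof.
move=> N; exists (gadget N), (src N), (snk N); split; first exact: src_neq_snk.
split; first by exists (first_steps_pairs N); apply: separating_first_steps_pairs.
move=> P F sepP adF; apply: leq_trans (separating_card_ge sepP).
by rewrite mulSn addnC leq_add2l almost_disjoint_size_le.
Qed.
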